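(* Let $E>0$, $J>0$, $|\alpha|\le 1$, and let $H_0$ be either $E(\sigma_x\otimes I_2+\sigma_y\otimes I_2+I_2\otimes\sigma_x+I_2\otimes\sigma_y)$ or $E(\sigma_z\otimes I_2+I_2\otimes\sigma_z)$. Let $$H=H_0+\alpha J(\sigma_x\otimes\sigma_x+\sigma_y\otimes\sigma_y)+\beta J\,\sigma_z\otimes\sigma_z,$$ where either $\beta=1$ (Ising model for $\alpha=0$, XXZ model for $\alpha\neq0$, XXX model for $\alpha=1$) or $\beta=0$ and $\alpha\ne 0$ (XX model). Then for every two-qubit density matrix $\rho$, $\mathcal{C}(\rho;H_0)\le\mathcal{C}(\rho;H)$; consequently $\mathcal{C}(\rho_A;H_A)+\mathcal{C}(\rho_B;H_B)\le\mathcal{C}(\rho;H)$, where $H_A=H_B=E(\sigma_x+\sigma_y)$ in the first case and $H_A=H_B=E\sigma_z$ in the second, and $\rho_A,\rho_B$ are the reduced states of $\rho$.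
   Context: Quantum battery capacity: for a Hermitian $H$ on $\mathbb{C}^d$ with eigenvalues $\epsilon_0\le\dots\le\epsilon_{d-1}$ and a density matrix $\rho$ with eigenvalues $\lambda_0\le\dots\le\lambda_{d-1}$, $\mathcal{C}(\rho;H)=\sum_{i=0}^{d-1}\epsilon_i(\lambda_i-\lambda_{d-1-i})$. $\sigma_x,\sigma_y,\sigma_z$ are the Pauli matrices. *)

(* Complex scalars: an arbitrary numClosedFieldType C
   (e.g. complex R for R : rcfType, algC). *)
From HB Require Import structures.
From mathcomp Require Import all_boot all_order all_algebra.
From mathcomp Require Import mxtens.
From Stdlib Require Import ClassicalEpsilon.
Set Implicit Arguments. Unset Strict Implicit. Unset Printing Implicit Defensive.
Import Order.TTheory GRing.Theory Num.Theory.
Local Open Scope ring_scope.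

Section QB.
Variable C : numClosedFieldType.

Definition adjmx {m n} (A : 'M[C]_(m, n)) : 'M[C]_(n, m) := (map_mx Num.conj A)^T.

Definition hermitian {n} (A : 'M[C]_n) : Prop := adjmx A = A.

Definition psd {n} (A : 'M[C]_n) : Prop :=
  forall v : 'cV[C]_n, 0 <= (adjmx v *m A *m v) 0 0.

Definition density_matrix {n} (rho : 'M[C]_n) : Prop :=
  hermitian rho /\ psd rho /\ \tr rho = 1.

Definition is_sorted_spectrum {n} (A : 'M[C]_n) (s : seq C) : Prop :=
  [/\ size s = n, all (fun x => x \is Num.real) s, sorted <=%R s &
      char_poly A = \prod_(x <- s) ('X - x%:P)].

(* eigenvalues in nondecreasing order (well defined for Hermitian A) *)
Definition spectrum {n} (A : 'M[C]_n) : seq C :=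
  epsilon (inhabits [::]) (is_sorted_spectrum A).

Definition capacity {n} (rho H : 'M[C]_n) : C :=
  \sum_(i < n) (spectrum H)`_i * ((spectrum rho)`_i - (spectrum rho)`_(n.-1 - i)).

Definition sx : 'M[C]_2 := \matrix_(i, j) (if i == j then 0 else 1).
Definition sy : 'M[C]_2 :=
  \matrix_(i, j) (if i == j then 0 else if (i : nat) == 0%N then - 'i else 'i).
Definition sz : 'M[C]_2 :=
  \matrix_(i, j) (if i == j then (if (i : nat) == 0%N then 1 else -1) else 0).
Definition I2 : 'M[C]_2 := 1%:M.

(* two-qubit space C^2 (x) C^2 = C^(2*2); A (x) B is mathcomp's tensmx *)
Definition ptraceB (rho : 'M[C]_(2 * 2)) : 'M[C]_2 :=  (* rho_A = Tr_B rho *)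
  \matrix_(i, j) \sum_(k < 2) rho (mxtens_index (i, k)) (mxtens_index (j, k)).
Definition ptraceA (rho : 'M[C]_(2 * 2)) : 'M[C]_2 :=  (* rho_B = Tr_A rho *)
  \matrix_(i, j) \sum_(k < 2) rho (mxtens_index (k, i)) (mxtens_index (k, j)).

Definition Hloc (b : bool) (E : C) : 'M[C]_2 := if b then E *: (sx + sy) else E *: sz.

Definition H0 (b : bool) (E : C) : 'M[C]_(2 * 2) :=
  tensmx (Hloc b E) I2 + tensmx I2 (Hloc b E).

Definition Hint (alpha beta J : C) : 'M[C]_(2 * 2) :=
  (alpha * J) *: (tensmx sx sx + tensmx sy sy) + (beta * J) *: tensmx sz sz.
End QB.

From Pilot Require Import Defs.
From HB Require Import structures.
From mathcomp Require Import all_boot all_order all_algebra.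
From mathcomp Require Import mxtens ring sesquilinear spectral.
From Stdlib Require Import ClassicalEpsilon.
(* [sesquilinear] exports its own [hermitian]; the one of [Defs] must win. *)
Import Pilot.Defs.
Import Order.TTheory GRing.Theory Num.Theory Num.Def.
Local Open Scope ring_scope.
Set Implicit Arguments. Unset Strict Implicit. Unset Printing Implicit Defensive.

(* Let a0 <= a1 be the eigenvalues of the one-qubit Hamiltonian h, with orthonormal
   eigenvectors w0, w1.  The free Hamiltonian h (x) 1 + 1 (x) h has spectrum
   2 a0, a0 + a1, a0 + a1, 2 a1, so C(rho; H0) = 2 (a1 - a0) (l3 - l0), whereas every
   four-level Hamiltonian H gives C(rho; H) >= (e3 - e0) (l3 - l0), and
   e3 - e0 >= <w1 w1|H|w1 w1> - <w0 w0|H|w0 w0> by the variational bounds on the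
   extreme eigenvalues.  Each Pauli matrix s is traceless, so <w0|s|w0> = - <w1|s|w1>:
   the interaction s (x) s has the same expectation in w0 w0 and in w1 w1, hence the
   spread e3 - e0 of H is at least 2 (a1 - a0) and C(rho; H0) <= C(rho; H).
   For the reduced states take eigenbases u_k of rho_A and v_k of rho_B; expanding the
   partial traces in these bases, the two local capacities add up to
   2 (a1 - a0) (<u1 v1|rho|u1 v1> - <u0 v0|rho|u0 v0>) <= C(rho; H0). *)

Section QubitBattery.
Variable C : numClosedFieldType.

Lemma big_ord2 (R : Type) (idx : R) (op : Monoid.law idx) (F : 'I_2 -> R) :
  \big[op/idx]_i F i = op (F 0) (F 1).
Proof. by rewrite big_ord_recl big_ord1; congr (op _ (F _)); exact: val_inj. Qed.

Lemma big_mxtens_index (R : Type) (idx : R) (op : Monoid.com_law idx) m n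
    (F : 'I_(m * n) -> R) :
  \big[op/idx]_k F k = \big[op/idx]_i \big[op/idx]_j F (mxtens_index (i, j)).
Proof.
rewrite pair_big /= (reindex (@mxtens_unindex m n)) /=.
  by apply: eq_bigr => k _; rewrite mxtens_unindexK.
by exists (@mxtens_index m n) => p _; rewrite ?mxtens_indexK ?mxtens_unindexK.
Qed.

Lemma sum_mul_delta n (F : 'I_n -> C) b : \sum_c F c * (c == b)%:R = F b.
Proof.
rewrite (bigD1 b) //= eqxx mulr1 big1 ?addr0 // => c /negbTE ->.
by rewrite mulr0.
Qed.

Lemma perm_eq2 (T : eqType) (x y a b : T) : perm_eq [:: x; y] [:: a; b] ->
  (x = a /\ y = b) \/ (x = b /\ y = a).
Proof.
move=> pe; have : x \in [:: a; b] by rewrite -(perm_mem pe) mem_head.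
rewrite !inE => /orP [/eqP ex|/eqP ex].
  left; split => //; move: pe; rewrite ex perm_cons => /perm_mem /(_ y).
  by rewrite !inE eqxx => /esym /eqP.
right; split => //; move: pe; rewrite ex => pe.
have : perm_eq [:: b; y] [:: b; a].
  by apply: (perm_trans pe); rewrite (perm_catC [:: a] [:: b]).
by rewrite perm_cons => /perm_mem /(_ y); rewrite !inE eqxx => /esym /eqP.
Qed.

Lemma adjmxE m n (A : 'M[C]_(m, n)) i j : adjmx A i j = (A j i)^*.
Proof. by rewrite /adjmx !mxE. Qed.

Lemma adjmxK m n (A : 'M[C]_(m, n)) : adjmx (adjmx A) = A.
Proof. by apply/matrixP => i j; rewrite !adjmxE conjCK. Qed.

Lemma adjmxM m n p (A : 'M[C]_(m, n)) (B : 'M[C]_(n, p)) :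
  adjmx (A *m B) = adjmx B *m adjmx A.
Proof. by rewrite /adjmx map_mxM trmx_mul. Qed.

Lemma adjmxD m n (A B : 'M[C]_(m, n)) : adjmx (A + B) = adjmx A + adjmx B.
Proof. by apply/matrixP => i j; rewrite !mxE rmorphD. Qed.

Lemma adjmxZ m n c (A : 'M[C]_(m, n)) : adjmx (c *: A) = c^* *: adjmx A.
Proof. by apply/matrixP => i j; rewrite !mxE rmorphM. Qed.

Lemma adjmx_tens m n p q (A : 'M[C]_(m, n)) (B : 'M[C]_(p, q)) :
  adjmx (A *t B) = adjmx A *t adjmx B.
Proof. by apply/matrixP => i j; rewrite !mxE rmorphM. Qed.

Lemma tensmx11 m n : (1%:M : 'M[C]_m) *t (1%:M : 'M[C]_n) = 1%:M.
Proof.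
apply/matrixP => p q; case: (mxtens_indexP p) => i j; case: (mxtens_indexP q) => k l.
rewrite tensmxE !mxE (inj_eq (can_inj (@mxtens_indexK m n))) xpair_eqE.
by case: (i =P k); case: (j =P l) => //= *; rewrite ?mulr0 ?mul0r ?mulr1.
Qed.

Lemma hermitianE n (A : 'M[C]_n) (i j : 'I_n) : hermitian A -> A i j = (A j i)^*.
Proof. by move=> hA; rewrite -{1}hA adjmxE. Qed.

Lemma hermitianD n (A B : 'M[C]_n) : hermitian A -> hermitian B -> hermitian (A + B).
Proof. by rewrite /hermitian adjmxD => -> ->. Qed.

Lemma hermitianZ n c (A : 'M[C]_n) : c \is Num.real -> hermitian A -> hermitian (c *: A).
Proof. by rewrite /hermitian adjmxZ => /CrealP -> ->. Qed.

Lemma hermitian_tens m n (A : 'M[C]_m) (B : 'M[C]_n) :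
  hermitian A -> hermitian B -> hermitian (A *t B).
Proof. by rewrite /hermitian adjmx_tens => -> ->. Qed.

Lemma hermitian1 n : hermitian (1%:M : 'M[C]_n).
Proof. by apply/matrixP => i j; rewrite !mxE rmorphMn rmorph1 eq_sym. Qed.

Lemma hermitian_sx : hermitian (sx C).
Proof.
apply/matrixP => i j; rewrite !mxE.
by case: i => [[|[|//]] ?]; case: j => [[|[|//]] ?]; rewrite /= ?rmorph0 ?rmorph1.
Qed.

Lemma hermitian_sy : hermitian (sy C).
Proof.
apply/matrixP => i j; rewrite !mxE.
case: i => [[|[|//]] ?]; case: j => [[|[|//]] ?]; rewrite /= ?rmorph0 //.
  exact: conjCi.
by apply: (canLR (@conjCK C)); rewrite conjCi.
Qed.

Lemma hermitian_sz : hermitian (sz C).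
Proof.
apply/matrixP => i j; rewrite !mxE.
by case: i => [[|[|//]] ?]; case: j => [[|[|//]] ?]; rewrite /= ?rmorph0 ?rmorphN ?rmorph1.
Qed.

Lemma mxtrace_sx : \tr (sx C) = 0.
Proof. by rewrite /mxtrace big_ord2 !mxE /= addr0. Qed.

Lemma mxtrace_sy : \tr (sy C) = 0.
Proof. by rewrite /mxtrace big_ord2 !mxE /= addr0. Qed.

Lemma mxtrace_sz : \tr (sz C) = 0.
Proof. by rewrite /mxtrace big_ord2 !mxE /= subrr. Qed.

Lemma hermitian_Hloc b (E : C) : E \is Num.real -> hermitian (Hloc b E).
Proof.
move=> Er; case: b; apply: hermitianZ => //.
by apply: hermitianD; [exact: hermitian_sx | exact: hermitian_sy].
exact: hermitian_sz.
Qed.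

Lemma hermitian_Hint (alpha beta J : C) : alpha \is Num.real -> beta \is Num.real ->
  J \is Num.real -> hermitian (Hint alpha beta J).
Proof.
move=> ar br Jr; have hx := hermitian_sx; have hy := hermitian_sy.
apply: hermitianD; apply: hermitianZ; rewrite ?realM //.
  by apply: hermitianD; apply: hermitian_tens.
exact: hermitian_tens hermitian_sz hermitian_sz.
Qed.

Lemma hermitian_ptraceB (rho : 'M[C]_(2 * 2)) : hermitian rho -> hermitian (ptraceB rho).
Proof.
move=> hr; apply/matrixP => i j; rewrite !mxE rmorph_sum; apply: eq_bigr => k _.
by rewrite [rho (mxtens_index (i, k)) _](hermitianE _ _ hr).
Qed.

Lemma hermitian_ptraceA (rho : 'M[C]_(2 * 2)) : hermitian rho -> hermitian (ptraceA rho).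
Proof.
move=> hr; apply/matrixP => i j; rewrite !mxE rmorph_sum; apply: eq_bigr => k _.
by rewrite [rho (mxtens_index (k, i)) _](hermitianE _ _ hr).
Qed.

(** * Spectra of Hermitian matrices *)

Lemma hermitian_unitary_diag n (A : 'M[C]_n) : hermitian A ->
  exists Q (d : 'rV[C]_n),
   [/\ adjmx Q *m Q = 1%:M, Q *m adjmx Q = 1%:M, (forall i, d 0 i \is Num.real)
     & A = Q *m diag_mx d *m adjmx Q].
Proof.
move=> hA; have hs : A \is hermsymmx.
  by apply/is_hermitianmxP; rewrite expr0 scale1r -{1}hA /adjmx map_trmx.
have /orthomx_spectralP eA := hermitian_normalmx hs.
have hr := hermitian_spectral_diag_real hs.
set P := spectralmx A in eA; have Pu : P \is unitarymx by exact: spectral_unitarymx.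
have PPt : P *m adjmx P = 1%:M by move/unitarymxP: Pu; rewrite /adjmx map_trmx.
have Pi : invmx P = adjmx P by rewrite invmx_unitary // /adjmx map_trmx.
exists (adjmx P), (spectral_diag A); split.
- by rewrite adjmxK.
- by rewrite adjmxK -Pi mulVmx // unitarymx_unit.
- by move=> i; exact: (mxOverP hr).
- by rewrite adjmxK -Pi.
Qed.

Lemma char_poly_unitary_conj n (Q A : 'M[C]_n) :
  adjmx Q *m Q = 1%:M -> Q *m adjmx Q = 1%:M ->
  char_poly (Q *m A *m adjmx Q) = char_poly A.
Proof.
move=> QQ1 QQ2; rewrite /char_poly /char_poly_mx.
set Qp := map_mx polyC Q; set Qa := map_mx polyC (adjmx Q).
have e : Qp *m Qa = 1%:M by rewrite -map_mxM QQ2 map_mx1.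
have e2 : Qa *m Qp = 1%:M by rewrite -map_mxM QQ1 map_mx1.
rewrite !map_mxM -/Qp -/Qa.
have -> : 'X%:M - Qp *m map_mx polyC A *m Qa = Qp *m ('X%:M - map_mx polyC A) *m Qa.
  by rewrite mulmxBr mulmxBl mul_mx_scalar -scalemxAl e scalemx1.
by rewrite !det_mulmx mulrC mulrA -det_mulmx e2 det1 mul1r.
Qed.

Definition diag_seq n (d : 'rV[C]_n) := [seq d 0 i | i <- enum 'I_n].

Lemma diag_seq2 (d : 'rV[C]_2) : diag_seq d = [:: d 0 0; d 0 1].
Proof.
by rewrite /diag_seq enum_ordSl enum_ordSl enum_ord0 /=; congr [:: _; d 0 _]; exact: val_inj.
Qed.

Lemma char_poly_diag n (d : 'rV[C]_n) :
  char_poly (diag_mx d) = \prod_(x <- diag_seq d) ('X - x%:P).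
Proof.
rewrite char_poly_trig ?diag_mx_is_trig // /diag_seq big_map big_enum /=.
by apply: eq_bigr => i _; rewrite mxE eqxx mulr1n.
Qed.

Lemma spectrum_eq n (A : 'M[C]_n) s : is_sorted_spectrum A s -> spectrum A = s.
Proof.
move=> hs; have := epsilon_spec (inhabits [::]) (is_sorted_spectrum A) (ex_intro _ s hs).
rewrite -/(spectrum A); case=> _ _ so1 cp1; case: hs => _ _ so2 cp2.
apply: (sorted_eq le_trans le_anti) => //; apply: prod_XsubC_eq.
by rewrite -cp1 -cp2.
Qed.

Lemma hermitian_spectrum n (A : 'M[C]_n) : hermitian A ->
  exists Q (d : 'rV[C]_n),
   [/\ adjmx Q *m Q = 1%:M, Q *m adjmx Q = 1%:M, A = Q *m diag_mx d *m adjmx Q,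
     perm_eq (spectrum A) (diag_seq d) & is_sorted_spectrum A (spectrum A)].
Proof.
move=> /hermitian_unitary_diag [Q [d [Q1 Q2 dr eA]]].
have sortP : perm_eq (sort <=%R (diag_seq d)) (diag_seq d).
  by apply/permPl; apply: perm_sort.
have hs : is_sorted_spectrum A (sort <=%R (diag_seq d)).
  split.
  - by rewrite size_sort size_map size_enum_ord.
  - by rewrite all_sort; apply/allP => x /mapP [i _ ->].
  - apply: (sort_sorted_in (P := fun x => x \is Num.real)).
      by move=> x y xr yr; exact: real_leVge.
    by apply/allP => x /mapP [i _ ->].
  - by rewrite eA char_poly_unitary_conj // char_poly_diag; apply: perm_big; rewrite perm_sym.
by exists Q, d; rewrite (spectrum_eq hs).
Qed.

Lemma spectrum_nth_le n (A : 'M[C]_n) (i j : nat) : hermitian A ->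
  (i <= j < n)%N -> (spectrum A)`_i <= (spectrum A)`_j.
Proof.
move=> /hermitian_spectrum [_ [_ [_ _ _ _ [sz _ so _]]]] /andP [ij jn].
apply: (sorted_leq_nth le_trans lexx) => //; rewrite inE sz //.
exact: leq_ltn_trans jn.
Qed.

(** * Quadratic forms *)

Definition qform n (A : 'M[C]_n) (v : 'cV[C]_n) : C := (adjmx v *m A *m v) 0 0.

Definition normalized n (v : 'cV[C]_n) := qform 1%:M v = 1.

Lemma qformE n (A : 'M[C]_n) v : qform A v = \sum_i \sum_j (v i 0)^* * A i j * v j 0.
Proof.
rewrite /qform mxE; under eq_bigr do rewrite mxE mulr_suml.
by rewrite exchange_big; apply: eq_bigr => i _; apply: eq_bigr => j _; rewrite adjmxE.
Qed.

Lemma qformD n (A B : 'M[C]_n) v : qform (A + B) v = qform A v + qform B v.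
Proof. by rewrite /qform mulmxDr mulmxDl mxE. Qed.

Lemma qformZ n (A : 'M[C]_n) c v : qform (c *: A) v = c * qform A v.
Proof. by rewrite /qform -scalemxAr -scalemxAl mxE. Qed.

Lemma qform_diag n (d : 'rV[C]_n) v : qform (diag_mx d) v = \sum_i d 0 i * `|v i 0| ^+ 2.
Proof.
rewrite /qform mul_mx_diag mxE; apply: eq_bigr => i _.
by rewrite mxE adjmxE normCKC mulrCA mulrA mulrC.
Qed.

Lemma qform1 n (v : 'cV[C]_n) : qform 1%:M v = \sum_i `|v i 0| ^+ 2.
Proof. by rewrite /qform mulmx1 mxE; apply: eq_bigr => i _; rewrite adjmxE normCKC. Qed.

Lemma qform_unitary_conj n (Q D : 'M[C]_n) v :
  qform (Q *m D *m adjmx Q) v = qform D (adjmx Q *m v).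
Proof. by rewrite /qform adjmxM adjmxK !mulmxA. Qed.

Lemma qform_eigen n (A : 'M[C]_n) u a : normalized u -> A *m u = a *: u -> qform A u = a.
Proof.
by rewrite /normalized /qform mulmx1 => uu e; rewrite -mulmxA e -scalemxAr mxE uu mulr1.
Qed.

Lemma qform_col n (A W : 'M[C]_n) k : qform A (col k W) = (adjmx W *m A *m W) k k.
Proof.
rewrite /qform !mxE; apply: eq_bigr => j _; rewrite !mxE; congr (_ * _).
by apply: eq_bigr => i _; rewrite !mxE.
Qed.

Lemma normalized_col n (W : 'M[C]_n) k : adjmx W *m W = 1%:M -> normalized (col k W).
Proof. by move=> e; rewrite /normalized qform_col mulmx1 e mxE eqxx. Qed.

Lemma tensmx_colE m n (u : 'cV[C]_m) (v : 'cV[C]_n) i j (k : 'I_1) :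
  (u *t v : 'cV_(m * n)) (mxtens_index (i, j)) k = u i 0 * v j 0.
Proof. by rewrite mxE mxtens_indexK /=; congr (u _ _ * v _ _); apply: ord1. Qed.

Lemma qform_tens m n (A : 'M[C]_m) (B : 'M[C]_n) (u : 'cV[C]_m) (v : 'cV[C]_n) :
  qform (A *t B) (u *t v) = qform A u * qform B v.
Proof.
rewrite !qformE big_mxtens_index mulr_suml; apply: eq_bigr => i _.
under eq_bigr do rewrite big_mxtens_index.
rewrite exchange_big mulr_suml; apply: eq_bigr => k _.
rewrite mulr_sumr; apply: eq_bigr => j _; rewrite mulr_sumr; apply: eq_bigr => l _.
by rewrite !tensmx_colE tensmxE rmorphM /=; ring.
Qed.

Lemma normalized_tens m n (u : 'cV[C]_m) (v : 'cV[C]_n) :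
  normalized u -> normalized v -> normalized (u *t v).
Proof. by rewrite /normalized -tensmx11 qform_tens => -> ->; rewrite mulr1. Qed.

Lemma qform_spectrum_bounds n (A : 'M[C]_n.+1) v : hermitian A -> normalized v ->
  (spectrum A)`_0 <= qform A v <= (spectrum A)`_n.
Proof.
move=> hA uv; have [Q [d [Q1 Q2 eA pe [sz _ so _]]]] := hermitian_spectrum hA.
set y := adjmx Q *m v.
have ny : \sum_i `|y i 0| ^+ 2 = 1.
  by rewrite -qform1 -(qform_unitary_conj Q) mulmx1 Q2.
have -> : qform A v = \sum_i d 0 i * `|y i 0| ^+ 2 by rewrite eA qform_unitary_conj qform_diag.
have dA i : exists2 k, (k < size (spectrum A))%N & (spectrum A)`_k = d 0 i.
  by apply/(nthP 0); rewrite (perm_mem pe); apply: map_f; rewrite mem_enum.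
have bd i : (spectrum A)`_0 <= d 0 i <= (spectrum A)`_n.
  have [k kn <-] := dA i; rewrite sz ltnS in kn.
  by rewrite !spectrum_nth_le //= !ltnS kn ?leqnn.
apply/andP; split.
  rewrite -[X in X <= _]mulr1 -ny mulr_sumr; apply: ler_sum => i _.
  by apply: ler_wpM2r; [rewrite exprn_ge0 | case/andP: (bd i)].
rewrite -[X in _ <= X]mulr1 -ny mulr_sumr; apply: ler_sum => i _.
by apply: ler_wpM2r; [rewrite exprn_ge0 | case/andP: (bd i)].
Qed.

Lemma qform_sub_le_spread n (A : 'M[C]_n.+1) u v : hermitian A ->
  normalized u -> normalized v ->
  qform A u - qform A v <= (spectrum A)`_n - (spectrum A)`_0.
Proof.
move=> hA uu uv; have /andP [_ le_u] := qform_spectrum_bounds hA uu.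
by have /andP [le_v _] := qform_spectrum_bounds hA uv; exact: lerB.
Qed.

(** * Orthonormal bases of a qubit *)

Definition onb2 (u0 u1 : 'cV[C]_2) :=
  [/\ normalized u0, normalized u1 &
      forall b c : 'I_2, u0 b 0 * (u0 c 0)^* + u1 b 0 * (u1 c 0)^* = (b == c)%:R].

Lemma onb2_sym u0 u1 : onb2 u0 u1 -> onb2 u1 u0.
Proof. by case=> n0 n1 compl; split => // x y; rewrite addrC. Qed.

Lemma onb2_unitary_cols (Q : 'M[C]_2) : adjmx Q *m Q = 1%:M -> Q *m adjmx Q = 1%:M ->
  onb2 (col 0 Q) (col 1 Q).
Proof.
move=> Q1 Q2; split; try exact: normalized_col.
by move=> b c; have := congr1 (fun M : 'M[C]_2 => M b c) Q2; rewrite /= !mxE big_ord2 !mxE.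
Qed.

Lemma eigenbasis2 (h : 'M[C]_2) : hermitian h ->
  exists u0 u1, [/\ onb2 u0 u1, qform h u0 = (spectrum h)`_0 & qform h u1 = (spectrum h)`_1].
Proof.
move=> hh; have [Q [d [Q1 Q2 eh pe [sz _ _ _]]]] := hermitian_spectrum hh.
have eig k : qform h (col k Q) = d 0 k.
  apply: qform_eigen; first exact: normalized_col.
  have hQ : h *m Q = Q *m diag_mx d by rewrite eh -!mulmxA Q1 mulmx1.
  have -> : h *m col k Q = col k (h *m Q) by rewrite !colE mulmxA.
  by rewrite hQ mul_mx_diag; apply/matrixP => i j; rewrite !mxE mulrC.
have onb := onb2_unitary_cols Q1 Q2.
move: pe sz; rewrite diag_seq2; case: (spectrum h) => [|x [|y [|]]] //= pe _.
have [[-> ->]|[-> ->]] := perm_eq2 pe.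
- by exists (col 0 Q), (col 1 Q); split.
- by exists (col 1 Q), (col 0 Q); split => //; apply: onb2_sym.
Qed.

Lemma qform_onb2_trace (A : 'M[C]_2) u0 u1 : onb2 u0 u1 -> qform A u0 + qform A u1 = \tr A.
Proof.
case=> _ _ compl; rewrite !qformE -big_split /mxtrace; apply: eq_bigr => i _.
have -> : A i i = (A *m 1%:M) i i by rewrite mulmx1.
rewrite mxE -big_split; apply: eq_bigr => j _.
by rewrite mxE -(compl j i) /=; ring.
Qed.

Lemma qform_traceless_onb2 (A : 'M[C]_2) u0 u1 : onb2 u0 u1 -> \tr A = 0 ->
  qform A u0 = - qform A u1.
Proof. by move=> onb trA; apply/eqP; rewrite -addr_eq0 qform_onb2_trace // trA. Qed.

Lemma qform_ptraceB (rho : 'M[C]_(2 * 2)) u v0 v1 : onb2 v0 v1 ->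
  qform (ptraceB rho) u = qform rho (u *t v0) + qform rho (u *t v1).
Proof.
case=> _ _ compl; rewrite !qformE -big_split /= big_mxtens_index; apply: eq_bigr => i _.
under [in RHS]eq_bigr => b _ do rewrite !big_mxtens_index -big_split /=.
rewrite [in RHS]exchange_big; apply: eq_bigr => j _.
under [in RHS]eq_bigr => b _ do rewrite -big_split /=.
rewrite mxE mulr_sumr mulr_suml; apply: eq_bigr => b _.
rewrite -(sum_mul_delta (fun c => (u i 0)^* * rho (mxtens_index (i, b)) (mxtens_index (j, c)) * u j 0) b).
apply: eq_bigr => c _.
by rewrite !tensmx_colE -(compl c b) !rmorphM /=; ring.
Qed.

Lemma qform_ptraceA (rho : 'M[C]_(2 * 2)) v u0 u1 : onb2 u0 u1 ->
  qform (ptraceA rho) v = qform rho (u0 *t v) + qform rho (u1 *t v).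
Proof.
case=> _ _ compl; rewrite !qformE -big_split /= big_mxtens_index [in RHS]exchange_big.
apply: eq_bigr => i _.
under [in RHS]eq_bigr => a _ do rewrite !big_mxtens_index -big_split /=.
under [in RHS]eq_bigr => a _ do under eq_bigr => c _ do rewrite -big_split /=.
under [in RHS]eq_bigr => a _ do rewrite exchange_big.
rewrite [in RHS]exchange_big; apply: eq_bigr => j _.
rewrite mxE mulr_sumr mulr_suml; apply: eq_bigr => a _.
rewrite -(sum_mul_delta (fun c => (v i 0)^* * rho (mxtens_index (a, i)) (mxtens_index (c, j)) * v j 0) a).
apply: eq_bigr => c _.
by rewrite !tensmx_colE -(compl c a) !rmorphM /=; ring.
Qed.

(** * Non-interacting two-qubit Hamiltonians *)

Definition local_sum (h : 'M[C]_2) : 'M[C]_(2 * 2) := h *t 1%:M + 1%:M *t h.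

Lemma char_poly_local_sum_diag (d : 'rV[C]_2) :
  char_poly (local_sum (diag_mx d)) = \prod_i \prod_j ('X - (d 0 i + d 0 j)%:P).
Proof.
have -> : local_sum (diag_mx d) =
    diag_mx (\row_k (d 0 (mxtens_unindex k).1 + d 0 (mxtens_unindex k).2)).
  apply/matrixP => p q; case: (mxtens_indexP p) => i j; case: (mxtens_indexP q) => k l.
  rewrite !mxE !mxtens_indexK /= (inj_eq (can_inj (@mxtens_indexK 2 2))) xpair_eqE.
  by case: (i =P k) => [->|_]; case: (j =P l) => [->|_];
    rewrite /= ?mulr1n ?mulr0n ?mulr1 ?mul1r ?mulr0 ?mul0r ?addr0 ?add0r.
rewrite char_poly_trig ?diag_mx_is_trig // big_mxtens_index.
by apply: eq_bigr => i _; apply: eq_bigr => j _; rewrite !mxE eqxx mulr1n mxtens_indexK.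
Qed.

Lemma spectrum_local_sum (h : 'M[C]_2) : hermitian h ->
  let a := spectrum h in
  spectrum (local_sum h) = [:: a`_0 + a`_0; a`_0 + a`_1; a`_0 + a`_1; a`_1 + a`_1].
Proof.
move=> hh /=; have [Q [d [Q1 Q2 eh pe [sz sr so _]]]] := hermitian_spectrum hh.
move: pe sz sr so; rewrite diag_seq2.
case: (spectrum h) => [|a0 [|a1 [|]]] //= pe _ /and3P [r0 r1 _] /andP [le01 _].
apply: spectrum_eq; split => /=.
- by [].
- by rewrite !realD.
- by rewrite !lerD2l le01 lerD2r le01 lexx.
have eH : local_sum h = (Q *t Q) *m local_sum (diag_mx d) *m adjmx (Q *t Q).
  by rewrite mulmxDr mulmxDl adjmx_tens !tensmx_mul -eh mulmx1 Q2.
rewrite eH char_poly_unitary_conj; first last.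
- by rewrite adjmx_tens tensmx_mul Q2 tensmx11.
- by rewrite adjmx_tens tensmx_mul Q1 tensmx11.
rewrite char_poly_local_sum_diag !big_ord2 /= !big_cons big_nil mulr1.
by have [[-> ->]|[-> ->]] := perm_eq2 pe; rewrite !polyCD; ring.
Qed.

Lemma qform_local_sum_tens (h : 'M[C]_2) u : normalized u ->
  qform (local_sum h) (u *t u) = qform h u + qform h u.
Proof. by move=> uu; rewrite qformD !qform_tens uu mulr1 mul1r. Qed.

(** * Battery capacities *)

Lemma capacity_qubit (rho H : 'M[C]_2) : capacity rho H =
  ((spectrum H)`_1 - (spectrum H)`_0) * ((spectrum rho)`_1 - (spectrum rho)`_0).
Proof. by rewrite /capacity !big_ord_recl big_ord0 /=; ring. Qed.

Lemma capacity_two_qubit (rho H : 'M[C]_(2 * 2)) : capacity rho H =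
  ((spectrum H)`_3 - (spectrum H)`_0) * ((spectrum rho)`_3 - (spectrum rho)`_0) +
  ((spectrum H)`_2 - (spectrum H)`_1) * ((spectrum rho)`_2 - (spectrum rho)`_1).
Proof. by rewrite /capacity !big_ord_recl big_ord0 /=; ring. Qed.

Lemma capacity_two_qubit_ge (rho H : 'M[C]_(2 * 2)) : hermitian rho -> hermitian H ->
  ((spectrum H)`_3 - (spectrum H)`_0) * ((spectrum rho)`_3 - (spectrum rho)`_0)
    <= capacity rho H.
Proof.
move=> hr hH; rewrite capacity_two_qubit lerDl.
by rewrite mulr_ge0 // subr_ge0 spectrum_nth_le.
Qed.

Lemma capacity_local_sum (rho : 'M[C]_(2 * 2)) (h : 'M[C]_2) : hermitian h ->
  capacity rho (local_sum h) =
  ((spectrum h)`_1 - (spectrum h)`_0) * (2 * ((spectrum rho)`_3 - (spectrum rho)`_0)).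
Proof.
by move=> hh; rewrite capacity_two_qubit spectrum_local_sum //= subrr mul0r addr0; ring.
Qed.

Lemma capacity_local_sum_le (rho V : 'M[C]_(2 * 2)) (h : 'M[C]_2) :
  hermitian rho -> hermitian h -> hermitian V ->
  (forall u0 u1, onb2 u0 u1 -> qform V (u0 *t u0) = qform V (u1 *t u1)) ->
  capacity rho (local_sum h) <= capacity rho (local_sum h + V).
Proof.
move=> hr hh hV Vsym; set H := local_sum h + V.
have hH : hermitian H.
  by apply: hermitianD => //; apply: hermitianD; apply: hermitian_tens => //; exact: hermitian1.
have [w0 [w1 [onbw hw0 hw1]]] := eigenbasis2 hh; have [nw0 nw1 _] := onbw.
have gap : ((spectrum h)`_1 - (spectrum h)`_0) * 2 <= (spectrum H)`_3 - (spectrum H)`_0.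
  apply: le_trans (qform_sub_le_spread (n := 3) hH (normalized_tens nw1 nw1)
    (normalized_tens nw0 nw0)).
  rewrite !(qformD (local_sum h)) !qform_local_sum_tens // hw0 hw1 (Vsym _ _ onbw).
  by rewrite le_eqVlt; apply/orP; left; apply/eqP; ring.
apply: le_trans (capacity_two_qubit_ge hr hH).
rewrite capacity_local_sum // mulrA ler_wpM2r // subr_ge0 spectrum_nth_le //.
Qed.

Lemma qform_Hint_onb2 (alpha beta J : C) u0 u1 : onb2 u0 u1 ->
  qform (Hint alpha beta J) (u0 *t u0) = qform (Hint alpha beta J) (u1 *t u1).
Proof.
move=> onb; rewrite !qformD !qformZ !qformD !qform_tens.
rewrite (qform_traceless_onb2 onb mxtrace_sx) (qform_traceless_onb2 onb mxtrace_sy).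
by rewrite (qform_traceless_onb2 onb mxtrace_sz) !mulrNN.
Qed.

Lemma capacity_ptrace_le_local_sum (rho : 'M[C]_(2 * 2)) (h : 'M[C]_2) :
  hermitian rho -> hermitian h ->
  capacity (ptraceB rho) h + capacity (ptraceA rho) h <= capacity rho (local_sum h).
Proof.
move=> hr hh; have [u0 [u1 [onbu eu0 eu1]]] := eigenbasis2 (hermitian_ptraceB hr).
have [v0 [v1 [onbv ev0 ev1]]] := eigenbasis2 (hermitian_ptraceA hr).
have [nu0 nu1 _] := onbu; have [nv0 nv1 _] := onbv.
rewrite !capacity_qubit capacity_local_sum // -eu0 -eu1 -ev0 -ev1.
rewrite (qform_ptraceB _ u0 onbv) (qform_ptraceB _ u1 onbv).
rewrite (qform_ptraceA _ v0 onbu) (qform_ptraceA _ v1 onbu).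
set a := _ - _; rewrite -mulrDr ler_wpM2l ?subr_ge0 ?spectrum_nth_le //.
have diag_spread := qform_sub_le_spread (n := 3) hr (normalized_tens nu1 nv1)
  (normalized_tens nu0 nv0).
apply: le_trans (ler_wpM2l (ler0n _ 2) diag_spread).
by rewrite le_eqVlt; apply/orP; left; apply/eqP; ring.
Qed.

End QubitBattery.

Theorem mainTheorem2 (C : numClosedFieldType) (b : bool) (E J alpha beta : C)
  (rho : 'M[C]_(2 * 2)) :
  E \is Num.real -> 0 < E -> J \is Num.real -> 0 < J ->
  alpha \is Num.real -> `|alpha| <= 1 ->
  (beta = 1 \/ (beta = 0 /\ alpha != 0)) ->
  density_matrix rho ->
  capacity rho (H0 b E) <= capacity rho (H0 b E + Hint alpha beta J) /\
  capacity (ptraceB rho) (Hloc b E) + capacity (ptraceA rho) (Hloc b E)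
    <= capacity rho (H0 b E + Hint alpha beta J).
Proof.
move=> Er _ Jr _ ar _ hbeta [hr _].
have br : beta \is Num.real by case: hbeta => [->|[-> _]]; rewrite ?real1 ?real0.
have hh := hermitian_Hloc b Er.
have le_H0 : capacity rho (H0 b E) <= capacity rho (H0 b E + Hint alpha beta J).
  apply: capacity_local_sum_le => //; first exact: hermitian_Hint.
  exact: qform_Hint_onb2.
split=> //; apply: le_trans le_H0.
exact: capacity_ptrace_le_local_sum.
Qed.
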